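(* Let $C\in M_n(\mathbb{C})$, $D=I-C^*C$, and define for $t\in\mathbb{R}$ $$H(t)=\tfrac12(e^{-it}C+e^{it}C^* ),\qquad K(t)=\tfrac{i}{2}(e^{it}C^*-e^{-it}C),$$ $$T_1(t,\mu)=\operatorname{tr}\bigl((\mu I-H(t))^{-1}K(t)\bigr),\qquad T_2(t,\lambda)=\operatorname{tr}\bigl((\lambda^2I-\lambda H(t)-\tfrac14 D)^{-1}\lambda K(t)\bigr),$$ regarded as rational functions of $\mu$ (resp. $\lambda$) for each $t$. Let $P_C(x,y)=\det(I-xC-yC^* )$ and $Q_C(x,y)=\det(I-xC-yC^*-xyD)$. Then: (1) $T_1\equiv0$ (for all $t$ and all $\mu$) if and only if $P_C(x,y)\in\mathbb{C}[xy]$; (2) $T_2\equiv0$ if and only if $Q_C(x,y)\in\mathbb{C}[xy]$.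
   Context: $\mathbb{C}[xy]$ denotes the set of polynomials in $x,y$ that are polynomials in the single product $xy$. *)

From HB Require Import structures.
From mathcomp Require Import all_boot all_order all_algebra.
From mathcomp Require Import reals trigo.
From mathcomp Require Import complex.
Set Implicit Arguments. Unset Strict Implicit. Unset Printing Implicit Defensive.
Import Order.TTheory GRing.Theory Num.Theory.
Local Open Scope ring_scope.
Local Open Scope complex_scope.

Section Defs.
Variables (R : realType) (n : nat).
Local Notation C := (R[i]).

Definition adjmx (A : 'M[C]_n) : 'M[C]_n := (map_mx (@conjc R) A)^T.

Definition expit (t : R) : C := cos t +i* sin t.

Definition Dmx (A : 'M[C]_n) : 'M[C]_n := 1%:M - adjmx A *m A.

Definition Hmx (A : 'M[C]_n) (t : R) : 'M[C]_n :=
  2^-1 *: (expit (- t) *: A + expit t *: adjmx A).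

Definition Kmx (A : 'M[C]_n) (t : R) : 'M[C]_n :=
  ('i / 2) *: (expit t *: adjmx A - expit (- t) *: A).

(* T_1(t, mu) = tr((mu I - H(t))^{-1} K(t)), at points where the inverse exists *)
Definition T1 (A : 'M[C]_n) (t : R) (mu : C) : C :=
  \tr (invmx (mu%:M - Hmx A t) *m Kmx A t).

Definition T2mat (A : 'M[C]_n) (t : R) (la : C) : 'M[C]_n :=
  (la ^+ 2)%:M - la *: Hmx A t - 4^-1 *: Dmx A.

Definition T2 (A : 'M[C]_n) (t : R) (la : C) : C :=
  \tr (invmx (T2mat A t la) *m (la *: Kmx A t)).

(* Bivariate polynomials in x, y: {poly {poly C}}, with x := 'X (outer
   variable) and y := 'X%:P (inner variable). *)
Definition cst2 (c : C) : {poly {poly C}} := (c%:P)%:P.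
Definition varx : {poly {poly C}} := 'X.
Definition vary : {poly {poly C}} := ('X)%:P.

Definition PC (A : 'M[C]_n) : {poly {poly C}} :=
  \det (1%:M - varx *: map_mx cst2 A - vary *: map_mx cst2 (adjmx A)).

Definition QC (A : 'M[C]_n) : {poly {poly C}} :=
  \det (1%:M - varx *: map_mx cst2 A - vary *: map_mx cst2 (adjmx A)
        - (varx * vary) *: map_mx cst2 (Dmx A)).
End Defs.

Definition in_Cxy (R : realType) (p : {poly {poly R[i]}}) : Prop :=
  exists q : {poly R[i]}, p = (map_poly (@cst2 R) q).[varx R * vary R].

(* Since K(t) = H'(t), T1(t, mu) is minus the t-derivative of log det (mu - H(t)), and
   det (mu - H(t)) = mu^n P_C(e^{-it} z, e^{it} z) with z = 1/(2 mu); likewise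
   lambda^2 - lambda H(t) - D/4 = lambda^2 (I - xC - yC^* - xyD) at the same point with
   z = 1/(2 lambda).  Moving t rotates x and y in opposite directions, so by Jacobi's
   formula each trace is a nonzero multiple of (E p)/p at (e^{-it} z, e^{it} z), where
   E = y d/dy - x d/dx and p = P_C or Q_C.  A polynomial lies in C[xy] iff E kills it,
   and E p is zero as soon as it vanishes at these points off the zeros of p: the
   Kronecker substitution x = w^M, y = w^(M+2) turns it into a polynomial in w that
   vanishes on the unit circle. *)

From HB Require Import structures.
From mathcomp Require Import all_boot all_order all_algebra.
From mathcomp Require Import reals trigo.
From mathcomp Require Import complex.
From mathcomp Require Import perm ring zify.
Set Implicit Arguments. Unset Strict Implicit. Unset Printing Implicit Defensive.
Import Order.TTheory GRing.Theory Num.Theory.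
Local Open Scope ring_scope.
Local Open Scope complex_scope.

Lemma coef1M (F : nzRingType) (p q : {poly F}) :
  (p * q)`_1 = p`_0 * q`_1 + p`_1 * q`_0.
Proof. by rewrite coefM !big_ord_recl big_ord0 addr0. Qed.

Section FirstOrderCoefficients.
Variable F : comNzRingType.

Lemma coef0_exp (p : {poly F}) k : (p ^+ k)`_0 = p`_0 ^+ k.
Proof. by rewrite -!horner_coef0 horner_exp. Qed.

Lemma coef1_exp (p : {poly F}) (c : F) k : p`_1 = c * p`_0 ->
  (p ^+ k)`_1 = k%:R * c * p`_0 ^+ k.
Proof.
move=> p1; elim: k => [|k IHk]; first by rewrite expr0 coefC !mul0r.
by rewrite exprS coef1M coef0_exp IHk p1 exprS -addn1 natrD; ring.
Qed.

Lemma coef1_prod_seq (I : eqType) (r : seq I) (G : I -> {poly F}) : uniq r ->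
  (\prod_(i <- r) G i)`_1 = \sum_(j <- r) (G j)`_1 * \prod_(i <- r | i != j) (G i)`_0.
Proof.
elim: r => [|x r IHr] /=; first by rewrite !big_nil coefC.
case/andP => xr ur; rewrite big_cons coef1M IHr // [in RHS]big_cons big_cons eqxx /=.
have -> : \prod_(i <- r | i != x) (G i)`_0 = \prod_(i <- r) (G i)`_0.
  rewrite big_seq_cond [RHS]big_seq; apply: eq_bigl => i.
  by case: (boolP (i \in r)) => //= ir; apply/eqP => eix; rewrite -eix ir in xr.
rewrite coef0_prod addrC; congr (_ + _); rewrite big_distrr /=.
rewrite big_seq [RHS]big_seq; apply: eq_bigr => j jr.
rewrite big_cons; have -> : (x != j) by apply/eqP => exj; rewrite exj jr in xr.
by rewrite mulrCA.
Qed.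

Lemma coef1_prod (I : finType) (G : I -> {poly F}) :
  (\prod_i G i)`_1 = \sum_j (G j)`_1 * \prod_(i | i != j) (G i)`_0.
Proof. by rewrite coef1_prod_seq ?index_enum_uniq. Qed.

Lemma coef1_det n (M : 'M[{poly F}]_n) :
  (\det M)`_1 = \tr (\adj (map_mx (coefp 0) M) *m map_mx (coefp 1) M).
Proof.
rewrite /determinant coef_sum.
have E (s : 'S_n) : ((-1) ^+ s * \prod_i M i (s i) : {poly F})`_1
   = \sum_j (-1) ^+ s * ((M j (s j))`_1 * \prod_(i | i != j) (M i (s i))`_0).
  rewrite -big_distrr /= -coef1_prod.
  by case: (odd_perm s); rewrite /= ?expr1 ?expr0 ?mulN1r ?mul1r ?coefN.
rewrite (eq_bigr _ (fun s _ => E s)) exchange_big /=.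
rewrite /mxtrace; under [RHS]eq_bigr do rewrite mxE.
rewrite [RHS]exchange_big /=; apply: eq_bigr => j _.
rewrite (partition_big (fun s : 'S_n => s j) predT) //=.
apply: eq_bigr => k _; rewrite !mxE expand_cofactor big_distrl /=.
apply: eq_bigr => s /eqP sjk; rewrite sjk -!mulrA; congr (_ * _).
rewrite mulrC; congr (_ * _); apply: eq_big => [i|i _]; first by rewrite eq_sym.
by rewrite mxE.
Qed.

End FirstOrderCoefficients.

(* [bisubst x0 y0 p] is [p(x0, y0)], with x the outer and y the inner variable. *)
Notation bisubst x0 y0 := (horner_morph (u := x0)
  (f := horner_morph (f := polyC) (u := y0) (fun _ => mulrC _ _)) (fun _ => mulrC _ _)).

Section Bivariate.
Variable F : comNzRingType.
Implicit Types (p : {poly {poly F}}) (a b c : F).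

Definition bieval p a b : F := (map_poly (horner_eval b) p).[a].

Definition bisize p : nat := maxn (size p) (\max_(i < size p) size (p`_i)%R).

Lemma size_bisize p : (size p <= bisize p)%N.
Proof. exact: leq_maxl. Qed.

Lemma size_coef_bisize p i : (size (p`_i)%R <= bisize p)%N.
Proof.
case: (ltnP i (size p)) => hi; last by rewrite nth_default ?size_poly0.
exact: leq_trans (leq_bigmax (Ordinal hi)) (leq_maxr _ _).
Qed.

Section Expansion.
Variables (N : nat) (p : {poly {poly F}}).
Hypotheses (sizeN : (size p <= N)%N) (size_coefN : forall i, (size (p`_i)%R <= N)%N).

Lemma bievalE a b :
  bieval p a b = \sum_(i < N) \sum_(j < N) p`_i`_j * a ^+ i * b ^+ j.
Proof.
rewrite /bieval (horner_coef_wide _ (leq_trans (size_poly _ _) sizeN)).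
apply: eq_bigr => i _; rewrite coef_map /= horner_evalE (horner_coef_wide _ (size_coefN i)).
by rewrite big_distrl /=; apply: eq_bigr => j _; rewrite mulrAC.
Qed.

Lemma bisubstE (x0 y0 : {poly F}) :
  bisubst x0 y0 p = \sum_(i < N) \sum_(j < N) (p`_i`_j)%:P * x0 ^+ i * y0 ^+ j.
Proof.
rewrite {1}/horner_morph (horner_coef_wide _ (leq_trans (size_poly _ _) sizeN)).
apply: eq_bigr => i _; rewrite coef_map /= /horner_morph.
rewrite (horner_coef_wide _ (leq_trans (size_poly _ _) (size_coefN i))).
by rewrite big_distrl /=; apply: eq_bigr => j _; rewrite coef_map mulrAC.
Qed.

End Expansion.

Lemma bieval0 a b : bieval 0 a b = 0.
Proof. by rewrite /bieval map_poly0 horner0. Qed.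

Lemma horner_bisubst (x0 y0 : {poly F}) p z :
  (bisubst x0 y0 p).[z] = bieval p x0.[z] y0.[z].
Proof.
rewrite (bisubstE (size_bisize p) (size_coef_bisize p)).
rewrite (bievalE (size_bisize p) (size_coef_bisize p)) horner_sum.
by apply: eq_bigr => i _; rewrite horner_sum; apply: eq_bigr => j _; rewrite !hornerE.
Qed.

Lemma bisubstX (x0 y0 : {poly F}) : bisubst x0 y0 'X = x0.
Proof. exact: horner_morphX. Qed.

Lemma bisubstXC (x0 y0 : {poly F}) : bisubst x0 y0 ('X)%:P = y0.
Proof. by rewrite (horner_morphC (f := horner_morph _)); apply: horner_morphX. Qed.

Lemma bisubstCC (x0 y0 : {poly F}) a : bisubst x0 y0 (a%:P)%:P = a%:P.
Proof. by rewrite (horner_morphC (f := horner_morph _)); apply: horner_morphC. Qed.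

Definition euler2 p : {poly {poly F}} := map_poly (fun q => 'X * q^`()) p - 'X * p^`().

Lemma coef_euler2 p i j : (euler2 p)`_i`_j = p`_i`_j * (j%:R - i%:R).
Proof.
have coefXderiv (R : nzRingType) (q : {poly R}) k : ('X * q^`())`_k = q`_k *+ k.
  by rewrite coefXM; case: k => [|k] //=; rewrite coef_deriv.
rewrite coefB coef_map_id0 ?deriv0 ?mulr0 // !coefXderiv coefB coefMn coefXderiv.
by rewrite mulrBr !mulr_natr.
Qed.

Lemma size_euler2 p : (size (euler2 p) <= size p)%N.
Proof.
apply/leq_sizeP => i hi; apply/polyP => j.
by rewrite coef_euler2 (leq_sizeP _ _ (leqnn _) i hi) coef0 mul0r.
Qed.

Lemma size_coef_euler2 p i : (size ((euler2 p)`_i)%R <= size (p`_i)%R)%N.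
Proof.
by apply/leq_sizeP => j hj; rewrite coef_euler2 (leq_sizeP _ _ (leqnn _) j hj) mul0r.
Qed.

(* The first-order jet of [eps |-> a * exp (c * eps)]. *)
Definition expjet a c : {poly F} := a%:P + (c * a)%:P * 'X.

Lemma expjet0 a c : (expjet a c)`_0 = a.
Proof. by rewrite coefD coefC coefCM coefX mulr0 addr0. Qed.

Lemma expjet1 a c : (expjet a c)`_1 = c * a.
Proof. by rewrite coefD coefC coefCM coefX mulr1 add0r. Qed.

Lemma coef1_bisubst_expjet a b c p :
  (bisubst (expjet a (- c)) (expjet b c) p)`_1 = c * bieval (euler2 p) a b.
Proof.
pose N := bisize p.
have sizeE : (size (euler2 p) <= N)%N := leq_trans (size_euler2 p) (size_bisize p).
have size_coefE i : (size ((euler2 p)`_i)%R <= N)%N.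
  exact: leq_trans (size_coef_euler2 p i) (size_coef_bisize p i).
rewrite (bisubstE (size_bisize p) (size_coef_bisize p)) (bievalE sizeE size_coefE).
rewrite coef_sum big_distrr; apply: eq_bigr => i _.
rewrite coef_sum big_distrr; apply: eq_bigr => j _.
have jet1 d e : (expjet d e)`_1 = e * (expjet d e)`_0 by rewrite expjet0 expjet1.
rewrite coef1M coef0M coef1M !coefC /= !mul0r !addr0 !coef0_exp.
rewrite !(coef1_exp _ (jet1 _ _)) !expjet0 coef_euler2; ring.
Qed.

(* Kronecker substitution: for [2 N <= M], distinct monomials [x^i y^j] with
   [i, j < N] go to distinct powers [X^(M (i + j) + 2 j)]. *)
Lemma bisubst_Xn_eq0 N M p : (size p <= N)%N -> (forall i, (size (p`_i)%R <= N)%N) ->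
  (2 * N <= M)%N -> bisubst 'X^M 'X^(M + 2) p = 0 -> p = 0.
Proof.
move=> sizeN size_coefN leNM; rewrite (bisubstE sizeN size_coefN) => p0.
apply/polyP => i; apply/polyP => j; rewrite !coef0.
case: (ltnP i N) => hi; last by rewrite (leq_sizeP _ _ sizeN) ?coef0.
case: (ltnP j N) => hj; last by rewrite (leq_sizeP _ _ (size_coefN i)).
have := congr1 (fun q : {poly F} => q`_(M * i + (M + 2) * j)) p0.
rewrite /= coef0 coef_sum; under eq_bigr do rewrite coef_sum.
rewrite pair_bigA (bigD1 (Ordinal hi, Ordinal hj)) //= big1 ?addr0.
  by rewrite -!exprM -mulrA -exprD coefCM coefXn eqxx mulr1.
move=> [i' j'] /= neq; rewrite -!exprM -mulrA -exprD coefCM coefXn.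
suff -> : (M * i + (M + 2) * j == M * i' + (M + 2) * j')%N = false by rewrite mulr0.
apply/negbTE; apply: contra neq => /eqP e.
have hj' := ltn_ord j'.
have ej : j = j' :> nat.
  have : ((i + j) * M + j.*2 = (i' + j') * M + j'.*2)%N by lia.
  by move/(congr1 (modn^~ M)); rewrite /= !modnMDl !modn_small; lia.
have ei : i = i' :> nat by nia.
by rewrite xpair_eqE -!val_eqE /= ei ej !eqxx.
Qed.

Section Pencil.
Variables (n : nat) (P Q D : 'M[F]_n).

Definition pencil2 : 'M[{poly {poly F}}]_n :=
  1%:M - 'X *: map_mx (fun a => a%:P%:P) P - ('X)%:P *: map_mx (fun a => a%:P%:P) Q
    - ('X * ('X)%:P) *: map_mx (fun a => a%:P%:P) D.

Lemma map_bisubst_pencil2 (x0 y0 : {poly F}) :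
  map_mx (bisubst x0 y0) pencil2 = 1%:M - x0 *: map_mx polyC P - y0 *: map_mx polyC Q
    - (x0 * y0) *: map_mx polyC D.
Proof.
apply/matrixP => i j; rewrite !mxE !rmorphB !rmorphM rmorph_nat /=.
by rewrite bisubstX bisubstXC !bisubstCC.
Qed.

Lemma bieval_det_pencil2_00 : bieval (\det pencil2) 0 0 = 1.
Proof.
rewrite -[0 in LHS](horner0 0) -horner_bisubst -det_map_mx map_bisubst_pencil2.
by rewrite mul0r !scale0r !subr0 det1 hornerC.
Qed.

Lemma det_trace_pencil2 (s a b c : F) :
  let M := s *: (1%:M - a *: P - b *: Q - (a * b) *: D) in
  \det M = s ^+ n * bieval (\det pencil2) a b /\
  \tr (\adj M *m ((s * c) *: (a *: P - b *: Q))) =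
    s ^+ n * (c * bieval (euler2 (\det pencil2)) a b).
Proof.
(* Move (a, b) to first order along (a e^(-c eps), b e^(c eps)), on which xy is constant. *)
move=> M; pose x0 := expjet a (- c); pose y0 := expjet b c.
pose Ms := s%:P *: map_mx (bisubst x0 y0) pencil2.
have detMs : \det Ms = (s ^+ n)%:P * bisubst x0 y0 (\det pencil2).
  by rewrite detZ det_map_mx polyC_exp.
have Ms0 : map_mx (coefp 0) Ms = M.
  apply/matrixP => i j; rewrite /Ms map_bisubst_pencil2 !mxE /= coefCM !coefB coefMn coef1.
  by rewrite !coefMC coef0M !expjet0.
have Ms1 : map_mx (coefp 1) Ms = (s * c) *: (a *: P - b *: Q).
  apply/matrixP => i j; rewrite /Ms map_bisubst_pencil2 !mxE /= coefCM !coefB coefMn coef1.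
  by rewrite !coefMC coef1M !expjet0 !expjet1 /=; ring.
rewrite -Ms0 -Ms1 -coef1_det det_map_mx detMs coefCM coef1_bisubst_expjet; split=> //.
by rewrite /= coefCM -horner_coef0 horner_bisubst !horner_coef0 !expjet0.
Qed.

End Pencil.

End Bivariate.

Section Complex.
Variable R : realType.
Local Notation C := R[i].
Implicit Types (t : R) (z : C) (p : {poly {poly C}}).

Lemma expitNM t : expit (- t) * expit t = 1.
Proof.
rewrite /expit cosN sinN /GRing.mul /=.
apply/eqP; rewrite eq_complex /= -(cos2Dsin2 t); apply/andP; split; apply/eqP; ring.
Qed.

Lemma expit_neq0 t : expit t != 0.
Proof. by apply: contra_eq_neq (expitNM t) => ->; rewrite mulr0 eq_sym oner_neq0. Qed.

Lemma poly_eq0_on_unit_circle (r : {poly C}) : (forall t, r.[expit t] = 0) -> r = 0.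
Proof.
move=> r0; pose x (k : nat) : R := k.+1%:R^-1.
have x_itv k : x k \in `[-1, 1].
  have x_gt0 : 0 < x k by rewrite invr_gt0 ltr0Sn.
  rewrite in_itv /= (le_trans _ (ltW x_gt0)) ?lerN10 //=.
  by rewrite invf_le1 ?ler1n // ltr0Sn.
apply: (@roots_geq_poly_eq0 _ _ [seq expit (acos (x k)) | k <- iota 0 (size r)]).
- by apply/allP => _ /mapP[k _ ->]; rewrite /root r0.
- rewrite map_inj_uniq ?iota_uniq // => k l /(congr1 (@complex.Re R)) /=.
  by rewrite !acosK ?x_itv // => /invr_inj /eqP; rewrite eqr_nat => /eqP [].
- by rewrite size_map size_iota.
Qed.

Lemma euler2_eq0_on_lines p : bieval p 0 0 != 0 ->
  (forall t z, z != 0 -> bieval p (expit (- t) * z) (expit t * z) != 0 ->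
     bieval (euler2 p) (expit (- t) * z) (expit t * z) = 0) ->
  euler2 p = 0.
Proof.
move=> p00 Ep0; pose N := bisize p; pose M := (2 * N).+1.
pose s := bisubst 'X^M 'X^(M + 2) p; pose r := bisubst 'X^M 'X^(M + 2) (euler2 p).
have s_neq0 : s != 0.
  apply: contra p00 => /eqP s0; have := horner_bisubst 'X^M 'X^(M + 2) p 0.
  by rewrite -/s s0 horner0 !hornerXn !expr0n addn2 => <-.
have rs0 : r * s = 0.
  apply: poly_eq0_on_unit_circle => t; rewrite hornerM !horner_bisubst !hornerXn.
  (* [(w^M, w^(M+2))] is the point [(w^-1 z, w z)] with [w = expit t], [z = w^(M+1)] *)
  have -> : expit t ^+ M = expit (- t) * expit t ^+ M.+1 by rewrite exprS mulrA expitNM mul1r.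
  have -> : expit t ^+ (M + 2) = expit t * expit t ^+ M.+1 by rewrite addn2 exprS.
  have [->|pne0] := eqVneq (bieval p (expit (- t) * expit t ^+ M.+1) (expit t * expit t ^+ M.+1)) 0.
    by rewrite mulr0.
  by rewrite Ep0 ?mul0r ?expf_neq0 ?expit_neq0.
apply: (@bisubst_Xn_eq0 _ N M).
- exact: leq_trans (size_euler2 p) (size_bisize p).
- by move=> i; apply: leq_trans (size_coef_euler2 p i) (size_coef_bisize p i).
- exact: leqnSn.
- by apply/eqP; move/eqP: rs0; rewrite mulf_eq0 (negbTE s_neq0) orbF.
Qed.

Lemma coef_Cxy (q : {poly C}) i :
  ((map_poly (@cst2 R) q).[varx R * vary R])`_i = (q`_i)%:P * 'X^i.
Proof.
rewrite (@horner_coef_wide _ (size q)); last exact: size_poly.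
have E (k : 'I_(size q)) : (map_poly (@cst2 R) q)`_k * (varx R * vary R) ^+ k
    = ((q`_k)%:P * 'X^k) *: 'X^k.
  rewrite -mul_polyC coef_map_id0 /cst2 ?polyC0 // polyCM exprMn /vary -rmorphXn /varx.
  ring.
rewrite (eq_bigr _ (fun k _ => E k)) coef_sumMXn.
case: (ltnP i (size q)) => hi.
  rewrite (bigD1 (Ordinal hi)) /=; last by rewrite eqxx.
  by rewrite big1 ?addr0 // => k /andP[/eqP ki]; rewrite -val_eqE /= ki eqxx.
rewrite big1; last by move=> k /eqP ki; move: (ltn_ord k); rewrite ki ltnNge hi.
by rewrite nth_default // polyC0 mul0r.
Qed.

Lemma in_CxyP p : in_Cxy p <-> (forall i j, i != j -> p`_i`_j = 0).
Proof.
split=> [[q ->] i j ij|p_diag].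
  by rewrite coef_Cxy coefCM coefXn eq_sym (negbTE ij) mulr0.
exists (\poly_(i < size p) p`_i`_i); apply/polyP => i; apply/polyP => j.
rewrite coef_Cxy coefCM coefXn coef_poly.
have [->|ji] := eqVneq j i; last by rewrite mulr0 p_diag // eq_sym.
by rewrite mulr1; case: ltnP => // hi; rewrite [p`_i]nth_default // coef0.
Qed.

Lemma in_Cxy_euler2 p : in_Cxy p <-> euler2 p = 0.
Proof.
rewrite in_CxyP; split=> [p_diag|E0 i j ij].
  apply/polyP => i; apply/polyP => j; rewrite coef_euler2 !coef0.
  by have [->|/p_diag->] := eqVneq i j; rewrite ?subrr ?mulr0 ?mul0r.
move/(congr1 (fun q : {poly {poly C}} => q`_i`_j))/eqP: E0; rewrite coef_euler2 !coef0 mulf_eq0.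
by rewrite subr_eq0 eqr_nat [j == i]eq_sym (negbTE ij) orbF => /eqP.
Qed.

End Complex.

Section Traces.
Variables (R : realType) (n : nat).
Local Notation C := R[i].

Lemma tr_invmx (M N : 'M[C]_n) : \det M != 0 ->
  \tr (invmx M *m N) = (\det M)^-1 * \tr (\adj M *m N).
Proof. by move=> detM; rewrite /invmx unitmxE unitfE detM -scalemxAl mxtraceZ. Qed.

Lemma tr_adj_scalar_sub_eq0 (M N : 'M[C]_n) :
  (forall mu, mu != 0 -> \tr (\adj (mu%:M - M) *m N) = 0) ->
  forall mu, \tr (\adj (mu%:M - M) *m N) = 0.
Proof.
move=> tr0 mu.
pose q := \tr (\adj ('X%:M - map_mx polyC M) *m map_mx polyC N).
have qE x : q.[x] = \tr (\adj (x%:M - M) *m N).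
  have evalC (L : 'M[C]_n) : map_mx (horner_eval x) (map_mx polyC L) = L.
    by apply/matrixP => i j; rewrite !mxE horner_evalE hornerC.
  rewrite -horner_evalE -trace_map_mx map_mxM map_mx_adj map_mxB.
  by rewrite map_scalar_mx /= horner_evalE hornerX !evalC.
suff q0 : q = 0 by rewrite -qE q0 horner0.
by apply: poly_eq0_on_unit_circle => t; rewrite qE tr0 ?expit_neq0.
Qed.

Section TraceFamily.
Variables (m : nat) (p : {poly {poly C}}) (N K : R -> C -> 'M[C]_n).
Hypothesis p00 : bieval p 0 0 != 0.
Hypothesis first_order : forall t z, z != 0 ->
  \det (N t (2 * z)^-1) = (2 * z)^-1 ^+ m * bieval p (expit (- t) * z) (expit t * z) /\
  \tr (\adj (N t (2 * z)^-1) *m K t (2 * z)^-1) =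
    (2 * z)^-1 ^+ m * (- 'i * bieval (euler2 p) (expit (- t) * z) (expit t * z)).
Hypothesis tr_adj_at0 : (forall t la, la != 0 -> \tr (\adj (N t la) *m K t la) = 0) ->
  forall t, \tr (\adj (N t 0) *m K t 0) = 0.

Lemma tr_invmx_eq0_iff :
  (forall t la, \det (N t la) != 0 -> \tr (invmx (N t la) *m K t la) = 0) <->
  euler2 p = 0.
Proof.
have two_neq0 : (2 : C) != 0 by rewrite pnatr_eq0.
have i_neq0 : ('i : C) != 0 by rewrite eq_complex /= oner_eq0 andbF.
have inv2_neq0 (z : C) : z != 0 -> (2 * z)^-1 != 0 by move=> z0; rewrite invr_neq0 ?mulf_neq0.
split=> [trN0|E0].
  apply: euler2_eq0_on_lines => // t z z0 pne0.
  have [detN trN] := first_order t z0.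
  have detN0 : \det (N t (2 * z)^-1) != 0 by rewrite detN mulf_neq0 ?expf_neq0 ?inv2_neq0.
  move/eqP: (trN0 t _ detN0); rewrite tr_invmx // trN !mulf_eq0 invr_eq0 (negbTE detN0).
  by rewrite expf_eq0 (negbTE (inv2_neq0 _ z0)) andbF oppr_eq0 (negbTE i_neq0) => /eqP.
have tr_adj0 t la : la != 0 -> \tr (\adj (N t la) *m K t la) = 0.
  move=> la0; have z0 : (2 * la)^-1 != 0 by rewrite inv2_neq0.
  have -> : la = (2 * (2 * la)^-1)^-1 by field.
  by rewrite (first_order t z0).2 E0 bieval0 !mulr0.
move=> t la detN0; rewrite tr_invmx //.
by have [->|/tr_adj0->] := eqVneq la 0; rewrite ?(tr_adj_at0 tr_adj0) mulr0.
Qed.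

End TraceFamily.
End Traces.

Section Pencils.
Variables (R : realType) (n : nat) (A : 'M[R[i]]_n).
Local Notation C := R[i].

Lemma PC_pencil2 : PC A = \det (pencil2 A (adjmx A) 0).
Proof.
rewrite /pencil2 [map_mx _ 0](_ : _ = 0) ?scaler0 ?subr0 //.
by apply/matrixP => i j; rewrite !mxE.
Qed.

Lemma QC_pencil2 : QC A = \det (pencil2 A (adjmx A) (Dmx A)).
Proof. by []. Qed.

Section AtPoint.
Variables (t : R) (z : C).
Hypothesis z_neq0 : z != 0.

Let two_neq0 : (2 : C) != 0. Proof. by rewrite pnatr_eq0. Qed.

Lemma Hmx_pencil : (2 * z)^-1%:M - Hmx A t = (2 * z)^-1 *:
  (1%:M - (expit (- t) * z) *: A - (expit t * z) *: adjmx A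
     - (expit (- t) * z * (expit t * z)) *: 0).
Proof.
rewrite scaler0 subr0; apply/matrixP => i j; rewrite !mxE.
by case: (i == j); rewrite ?mulr1n ?mulr0n; field.
Qed.

Lemma Kmx_pencil : Kmx A t =
  ((2 * z)^-1 * - 'i) *: ((expit (- t) * z) *: A - (expit t * z) *: adjmx A).
Proof. by apply/matrixP => i j; rewrite !mxE; field. Qed.

Lemma T2mat_pencil : T2mat A t (2 * z)^-1 = (2 * z)^-1 ^+ 2 *:
  (1%:M - (expit (- t) * z) *: A - (expit t * z) *: adjmx A
     - (expit (- t) * z * (expit t * z)) *: Dmx A).
Proof.
rewrite mulrACA expitNM mul1r; apply/matrixP => i j; rewrite !mxE.
by case: (i == j); rewrite ?mulr1n ?mulr0n; field.
Qed.

Lemma det_trace_H_PC :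
  \det ((2 * z)^-1%:M - Hmx A t) =
    (2 * z)^-1 ^+ n * bieval (PC A) (expit (- t) * z) (expit t * z) /\
  \tr (\adj ((2 * z)^-1%:M - Hmx A t) *m Kmx A t) =
    (2 * z)^-1 ^+ n * (- 'i * bieval (euler2 (PC A)) (expit (- t) * z) (expit t * z)).
Proof. by rewrite Hmx_pencil Kmx_pencil PC_pencil2; apply: det_trace_pencil2. Qed.

Lemma det_trace_T2mat_QC :
  \det (T2mat A t (2 * z)^-1) =
    (2 * z)^-1 ^+ (2 * n) * bieval (QC A) (expit (- t) * z) (expit t * z) /\
  \tr (\adj (T2mat A t (2 * z)^-1) *m ((2 * z)^-1 *: Kmx A t)) =
    (2 * z)^-1 ^+ (2 * n) * (- 'i * bieval (euler2 (QC A)) (expit (- t) * z) (expit t * z)).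
Proof.
rewrite exprM T2mat_pencil Kmx_pencil scalerA [_ * (_ * - 'i)]mulrA -expr2 QC_pencil2.
exact: det_trace_pencil2.
Qed.

End AtPoint.

End Pencils.

Theorem mainTheorem9 (R : realType) (n : nat) (A : 'M[R[i]]_n) :
  ((forall (t : R) (mu : R[i]), \det (mu%:M - Hmx A t) != 0 -> T1 A t mu = 0)
     <-> in_Cxy (PC A)) /\
  ((forall (t : R) (la : R[i]), \det (T2mat A t la) != 0 -> T2 A t la = 0)
     <-> in_Cxy (QC A)).
Proof.
split; rewrite in_Cxy_euler2.
- apply: (tr_invmx_eq0_iff (m := n) (N := fun t mu => mu%:M - Hmx A t) (K := fun t _ => Kmx A t)).
  + by rewrite PC_pencil2 bieval_det_pencil2_00 oner_neq0.
  + exact: det_trace_H_PC.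
  + move=> tr0 t; exact: (tr_adj_scalar_sub_eq0 (tr0 t)).
- apply: (tr_invmx_eq0_iff (m := 2 * n) (N := T2mat A) (K := fun t la => la *: Kmx A t)).
  + by rewrite QC_pencil2 bieval_det_pencil2_00 oner_neq0.
  + exact: det_trace_T2mat_QC.
  + by move=> _ t; rewrite scale0r mulmx0 linear0.
Qed.
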